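(* Let $\alpha\in(0,1)$, $\eta>0$, and run the generalized share algorithm with the projection mixing rule $\hat p_{t+1}\in\arg\min_{x\in\Delta_d^\alpha}\mathcal K(x,v_{t+1})$. Then for all $t\ge1$, all loss sequences in $[0,1]^d$, and all $q_t\in\Delta_d^\alpha$, \[ (\hat p_t-q_t)^\top\ell_t\le\frac1\eta\sum_{i=1}^d q_{i,t}\ln\frac{\hat p_{i,t+1}}{\hat p_{i,t}}+\frac\eta8 . \]
   Context: Let $d\ge1$ and $\Delta_d=\{q\in[0,1]^d:\sum_{i=1}^d q_i=1\}$. The generalized share algorithm with learning rate $\eta>0$ and mixing functions $\psi_t:[0,1]^{td}\to\Delta_d$ ($t\ge2$) works as follows: $\hat p_1=v_1=(1/d,\dots,1/d)$. At each round $t=1,2,\dots$ it predicts $\hat p_t=(\hat p_{1,t},\dots,\hat p_{d,t})\in\Delta_d$, observes a loss vector $\ell_t=(\ell_{1,t},\dots,\ell_{d,t})\in[0,1]^d$ (arbitrary), and suffers loss $\hat p_t^\top\ell_t$. It then forms the pre-weights $v_{j,t+1}=\hat p_{j,t}e^{-\eta\ell_{j,t}}/\sum_{i=1}^d\hat p_{i,t}e^{-\eta\ell_{i,t}}$ for $j=1,\dots,d$, sets $v_{t+1}=(v_{1,t+1},\dots,v_{d,t+1})$, and defines $\hat p_{t+1}=\psi_{t+1}(V_{t+1})$ where $V_{t+1}=[v_{i,s}]_{1\le i\le d,1\le s\le t+1}$ is the $d\times(t+1)$ matrix of all pre-weights so far. Here $\Delta_d^\alpha=[\alpha/d,1]^d\cap\Delta_d$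 and $\mathcal K(x,v)=\sum_{i=1}^d x_i\ln(x_i/v_i)$ is the Kullback–Leibler divergence. *)

(* real numbers, exp, ln. Vectors in R^d are functions
   nat -> R, with coordinates indexed 0 .. d-1. *)
From Stdlib Require Import Reals.
Open Scope R_scope.

Fixpoint sumd (d : nat) (f : nat -> R) : R :=
  match d with
  | O => 0
  | S n => sumd n f + f n
  end.

Definition in_simplex (d : nat) (x : nat -> R) : Prop :=
  (forall i, (i < d)%nat -> 0 <= x i <= 1) /\ sumd d x = 1.

Definition in_simplex_alpha (d : nat) (alpha : R) (x : nat -> R) : Prop :=
  in_simplex d x /\ (forall i, (i < d)%nat -> alpha / INR d <= x i).

Definition KL (d : nat) (x v : nat -> R) : R :=
  sumd d (fun i => x i * ln (x i / v i)).

Definition preweight (d : nat) (eta : R) (p l : nat -> R) : nat -> R :=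
  fun j => p j * exp (- eta * l j) /
           sumd d (fun i => p i * exp (- eta * l i)).

(* p : round t -> weight vector \hat p_t (rounds t >= 1);
   l : round t -> loss vector \ell_t.
   p is a run of the generalized share algorithm with the projection
   mixing rule \hat p_{t+1} \in argmin_{x in Delta_d^alpha} K(x, v_{t+1}). *)
Definition share_projection_run (d : nat) (alpha eta : R)
    (l p : nat -> nat -> R) : Prop :=
  (forall i, (i < d)%nat -> p 1%nat i = 1 / INR d) /\
  (forall t, (1 <= t)%nat ->
     in_simplex_alpha d alpha (p (S t)) /\
     (forall x, in_simplex_alpha d alpha x ->
        KL d (p (S t)) (preweight d eta (p t) (l t))
        <= KL d x (preweight d eta (p t) (l t)))).

From Stdlib Require Import Reals Lra Psatz.
From Coquelicot Require Import Coquelicot.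
Open Scope R_scope.

(* Write P = p_t, L = l_t, v = preweight P L = P e^{-eta L} / Z and
   p' = p_{t+1}.  The quantity to bound splits as
     sum_i q_i ln(p'_i/P_i) = sum_i q_i ln(p'_i/v_i) - eta q.L - ln Z.
   Two independent facts then finish the argument:
   - Hoeffding's lemma, ln Z <= -eta P.L + eta^2/8: by convexity of exp,
     Z is at most the moment generating function of a Bernoulli(P.L)
     variable, whose logarithm is bounded by a second-order calculus
     argument (two applications of the mean value theorem);
   - the generalized Pythagorean inequality sum_i q_i ln(p'_i/v_i) >= 0,
     which follows from the first-order optimality of the projection p'
     (perturbing p' towards q inside the convex set Delta_d^alpha) and
     Gibbs' inequality KL(p', v) >= 0.
   The file develops finite sums, the calculus facts, Hoeffding's lemma,
   the projection inequality, and then the one-step bound, from which the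
   theorem follows for every round of a run of the algorithm. *)

Lemma sumd_ext (d : nat) (f g : nat -> R) :
  (forall i, (i < d)%nat -> f i = g i) -> sumd d f = sumd d g.
Proof.
  induction d as [|d IH]; intros Hfg; simpl; [reflexivity|].
  rewrite IH by (intros i Hi; apply Hfg; lia).
  rewrite Hfg by lia. reflexivity.
Qed.

Lemma sumd_le (d : nat) (f g : nat -> R) :
  (forall i, (i < d)%nat -> f i <= g i) -> sumd d f <= sumd d g.
Proof.
  induction d as [|d IH]; intros Hfg; simpl; [lra|].
  apply Rplus_le_compat; [apply IH; intros i Hi|]; apply Hfg; lia.
Qed.

Lemma sumd_nonneg (d : nat) (f : nat -> R) :
  (forall i, (i < d)%nat -> 0 <= f i) -> 0 <= sumd d f.
Proof.
  induction d as [|d IH]; intros Hf; simpl; [lra|].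
  apply Rplus_le_le_0_compat; [apply IH; intros i Hi|]; apply Hf; lia.
Qed.

Lemma sumd_plus (d : nat) (f g : nat -> R) :
  sumd d (fun i => f i + g i) = sumd d f + sumd d g.
Proof. induction d as [|d IH]; simpl; [ring|]. rewrite IH. ring. Qed.

Lemma sumd_minus (d : nat) (f g : nat -> R) :
  sumd d (fun i => f i - g i) = sumd d f - sumd d g.
Proof. induction d as [|d IH]; simpl; [ring|]. rewrite IH. ring. Qed.

Lemma sumd_scal (d : nat) (c : R) (f : nat -> R) :
  sumd d (fun i => c * f i) = c * sumd d f.
Proof. induction d as [|d IH]; simpl; [ring|]. rewrite IH. ring. Qed.

Lemma sumd_const (d : nat) (c : R) : sumd d (fun _ => c) = INR d * c.
Proof. induction d as [|d IH]; simpl sumd; [simpl; ring|]. rewrite IH, S_INR. ring. Qed.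

Lemma exp_monotone (x y : R) : x <= y -> exp x <= exp y.
Proof.
  intros [Hlt | ->]; [left; apply exp_increasing, Hlt | right; reflexivity].
Qed.

Lemma exp_tangent (a z : R) : exp z * (1 + (a - z)) <= exp a.
Proof.
  replace (exp a) with (exp z * exp (a - z)) by (rewrite <- exp_plus; f_equal; ring).
  apply Rmult_le_compat_l; [left; apply exp_pos | apply exp_ineq1_le].
Qed.

Lemma ln_le_sub_one (y : R) : 0 < y -> ln y <= y - 1.
Proof. intros Hy. pose proof (exp_ineq1_le (ln y)) as H. rewrite exp_ln in H; lra. Qed.

Lemma nonneg_of_deriv_nonneg (h h' : R -> R) (c : R) :
  0 <= c -> h 0 = 0 -> (forall x, is_derive h x (h' x)) ->
  (forall x, 0 <= x <= c -> 0 <= h' x) -> 0 <= h c.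
Proof.
  intros Hc H0 Hder Hpos.
  destruct (Req_dec c 0) as [->|Hc0]; [lra|].
  destruct (MVT_cor3 h h' 0 c) as [x [Hx0 [Hxc Hmvt]]];
    [lra | intros x _ _; apply is_derive_Reals, Hder |].
  rewrite Hmvt, H0. specialize (Hpos x (conj Hx0 Hxc)). nra.
Qed.

(* E[exp(-x X)] for X ~ Bernoulli(m). *)
Definition bernoulli_mgf (m x : R) : R := 1 - m + m * exp (- x).

Lemma bernoulli_mgf_pos (m x : R) : 0 <= m <= 1 -> 0 < bernoulli_mgf m x.
Proof.
  intros Hm. unfold bernoulli_mgf. pose proof (exp_pos (- x)).
  destruct (Req_dec m 0) as [->|Hm0]; [lra | nra].
Qed.

Lemma product_le_quarter_square (a b : R) : a * b <= (a + b) ^ 2 / 4.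
Proof. pose proof (pow2_ge_0 (a - b)). nra. Qed.

(* Nonnegativity of the derivative of x |-> -x m + x^2/8 - ln mgf(m, x);
   its own derivative 1/4 - (1-m) m e^{-x} / mgf^2 is nonnegative by AM-GM. *)
Lemma bernoulli_gap_deriv_nonneg (m x : R) :
  0 <= m <= 1 -> 0 <= x ->
  0 <= - m + x / 4 + m * exp (- x) / bernoulli_mgf m x.
Proof.
  intros Hm Hx.
  apply (nonneg_of_deriv_nonneg
    (fun y => - m + y / 4 + m * exp (- y) / bernoulli_mgf m y)
    (fun y => 1 / 4 - (1 - m) * (m * exp (- y)) / bernoulli_mgf m y ^ 2));
    [exact Hx | | | ].
  - cbv beta. unfold bernoulli_mgf. rewrite Ropp_0, exp_0.
    replace (1 - m + m * 1) with 1 by ring. field.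
  - intro y. pose proof (bernoulli_mgf_pos m y Hm) as HB.
    unfold bernoulli_mgf in *. auto_derive; [lra|]. field. lra.
  - intros y _. pose proof (bernoulli_mgf_pos m y Hm) as HB.
    pose proof (product_le_quarter_square (1 - m) (m * exp (- y))) as Hamgm.
    replace (1 / 4 - (1 - m) * (m * exp (- y)) / bernoulli_mgf m y ^ 2) with
      ((bernoulli_mgf m y ^ 2 / 4 - (1 - m) * (m * exp (- y))) / bernoulli_mgf m y ^ 2)
      by (field; lra).
    apply Rdiv_le_0_compat; [unfold bernoulli_mgf in *; lra | apply pow_lt, HB].
Qed.

Lemma hoeffding_bernoulli (m x : R) :
  0 <= m <= 1 -> 0 <= x -> ln (bernoulli_mgf m x) <= - x * m + x ^ 2 / 8.
Proof.
  intros Hm Hx.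
  enough (0 <= - x * m + x ^ 2 / 8 - ln (bernoulli_mgf m x)) by lra.
  apply (nonneg_of_deriv_nonneg
    (fun y => - y * m + y ^ 2 / 8 - ln (bernoulli_mgf m y))
    (fun y => - m + y / 4 + m * exp (- y) / bernoulli_mgf m y));
    [exact Hx | | | ].
  - cbv beta. unfold bernoulli_mgf. rewrite Ropp_0, exp_0.
    replace (1 - m + m * 1) with 1 by ring. rewrite ln_1. lra.
  - intro y. pose proof (bernoulli_mgf_pos m y Hm) as HB.
    unfold bernoulli_mgf in *. auto_derive; [lra|]. field. lra.
  - intros y [Hy _]. now apply bernoulli_gap_deriv_nonneg.
Qed.

(* Convexity of exp: e^{-x L} lies below the chord through 0 and -x,
   which is the Bernoulli(L) moment generating function. *)
Lemma exp_below_chord (L x : R) : 0 <= L <= 1 -> exp (- x * L) <= bernoulli_mgf L x.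
Proof.
  intros HL. unfold bernoulli_mgf.
  pose proof (exp_tangent 0 (- x * L)) as Hat0.
  pose proof (exp_tangent (- x) (- x * L)) as Hatx.
  rewrite exp_0 in Hat0.
  replace (exp (- x * L)) with
    ((1 - L) * (exp (- x * L) * (1 + (0 - - x * L)))
     + L * (exp (- x * L) * (1 + (- x - - x * L)))) by ring.
  assert (H0 : (1 - L) * (exp (- x * L) * (1 + (0 - - x * L))) <= (1 - L) * 1)
    by (apply Rmult_le_compat_l; lra).
  assert (Hx : L * (exp (- x * L) * (1 + (- x - - x * L))) <= L * exp (- x))
    by (apply Rmult_le_compat_l; lra).
  lra.
Qed.

Definition normalizer (d : nat) (eta : R) (P L : nat -> R) : R :=
  sumd d (fun i => P i * exp (- eta * L i)).

(* Z > 0, as every loss is at most 1 and P is a probability vector. *)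
Lemma normalizer_pos (d : nat) (eta : R) (P L : nat -> R) :
  0 <= eta -> in_simplex d P -> (forall i, (i < d)%nat -> 0 <= L i <= 1) ->
  0 < normalizer d eta P L.
Proof.
  intros Heta [HP HPsum] HL.
  apply Rlt_le_trans with (exp (- eta) * sumd d P).
  - rewrite HPsum, Rmult_1_r. apply exp_pos.
  - unfold normalizer. rewrite <- sumd_scal. apply sumd_le. intros i Hi.
    destruct (HP i Hi), (HL i Hi).
    assert (exp (- eta) <= exp (- eta * L i)) by (apply exp_monotone; nra).
    nra.
Qed.

(* Hoeffding's lemma for losses in [0, 1] weighted by a probability vector P:
   ln Z <= -eta P.L + eta^2/8, via the Bernoulli(P.L) mgf bound on Z. *)
Lemma hoeffding_mixture (d : nat) (eta : R) (P L : nat -> R) :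
  0 <= eta -> in_simplex d P -> (forall i, (i < d)%nat -> 0 <= L i <= 1) ->
  ln (normalizer d eta P L) <= - eta * sumd d (fun i => P i * L i) + eta ^ 2 / 8.
Proof.
  intros Heta HPs HL.
  pose proof (normalizer_pos d eta P L Heta HPs HL) as HZ.
  destruct HPs as [HP HPsum].
  set (m := sumd d (fun i => P i * L i)).
  assert (Hm : 0 <= m <= 1).
  { split.
    - apply sumd_nonneg. intros i Hi. destruct (HP i Hi), (HL i Hi). nra.
    - rewrite <- HPsum. apply sumd_le. intros i Hi. destruct (HP i Hi), (HL i Hi). nra. }
  apply Rle_trans with (ln (bernoulli_mgf m eta)); [|now apply hoeffding_bernoulli].
  apply ln_le; [exact HZ|].
  replace (bernoulli_mgf m eta) with (sumd d (fun i => P i * bernoulli_mgf (L i) eta)).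
  - apply sumd_le. intros i Hi.
    apply Rmult_le_compat_l; [apply (HP i Hi) | apply exp_below_chord, HL, Hi].
  - unfold bernoulli_mgf, m.
    rewrite (sumd_ext d _ (fun i => P i - (1 - exp (- eta)) * (P i * L i))) by (intros; ring).
    rewrite sumd_minus, sumd_scal, HPsum. ring.
Qed.

Lemma preweight_pos (d : nat) (eta : R) (P L : nat -> R) (i : nat) :
  0 < P i -> 0 < normalizer d eta P L -> 0 < preweight d eta P L i.
Proof.
  intros HP HZ.
  apply Rdiv_lt_0_compat; [apply Rmult_lt_0_compat; [exact HP | apply exp_pos] | exact HZ].
Qed.

Lemma preweight_sum (d : nat) (eta : R) (P L : nat -> R) :
  0 < normalizer d eta P L -> sumd d (preweight d eta P L) = 1.
Proof.
  intros HZ. unfold preweight. fold (normalizer d eta P L).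
  rewrite (sumd_ext d _ (fun j => / normalizer d eta P L * (P j * exp (- eta * L j))))
    by (intros; field; lra).
  rewrite sumd_scal. fold (normalizer d eta P L). field. lra.
Qed.

Lemma preweight_log_ratio (d : nat) (eta : R) (P L : nat -> R) (i : nat) :
  0 < P i -> 0 < normalizer d eta P L ->
  ln (preweight d eta P L i / P i) = - eta * L i - ln (normalizer d eta P L).
Proof.
  intros HP HZ. unfold preweight. fold (normalizer d eta P L).
  replace (P i * exp (- eta * L i) / normalizer d eta P L / P i)
    with (exp (- eta * L i) / normalizer d eta P L) by (field; lra).
  rewrite ln_div, ln_exp; [ring | apply exp_pos | exact HZ].
Qed.

Lemma simplex_alpha_pos (d : nat) (alpha : R) (x : nat -> R) (i : nat) :
  (1 <= d)%nat -> 0 < alpha -> in_simplex_alpha d alpha x -> (i < d)%nat -> 0 < x i.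
Proof.
  intros Hd Ha [_ Hlow] Hi.
  assert (0 < alpha / INR d) by (apply Rdiv_lt_0_compat; [exact Ha | apply lt_0_INR; lia]).
  specialize (Hlow i Hi). lra.
Qed.

Lemma simplex_alpha_segment (d : nat) (alpha : R) (x y : nat -> R) (e : R) :
  in_simplex_alpha d alpha x -> in_simplex_alpha d alpha y -> 0 <= e <= 1 ->
  in_simplex_alpha d alpha (fun i => x i + e * (y i - x i)).
Proof.
  intros [[Hx Hxsum] Hxlow] [[Hy Hysum] Hylow] He.
  split; [split|].
  - intros i Hi. specialize (Hx i Hi). specialize (Hy i Hi). nra.
  - rewrite sumd_plus, sumd_scal, sumd_minus, Hxsum, Hysum. ring.
  - intros i Hi. specialize (Hxlow i Hi). specialize (Hylow i Hi). nra.
Qed.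

Lemma entropy_term_lower (x v : R) : 0 < x -> 0 < v -> x - v <= x * ln (x / v).
Proof.
  intros Hx Hv.
  pose proof (ln_le_sub_one (v / x) ltac:(apply Rdiv_lt_0_compat; lra)) as Hlog.
  rewrite ln_div in Hlog by lra. rewrite ln_div by lra.
  assert (H : x * (ln v - ln x) <= x * (v / x - 1)) by (apply Rmult_le_compat_l; lra).
  replace (x * (v / x - 1)) with (v - x) in H by (field; lra).
  lra.
Qed.

Lemma entropy_term_upper (x y v : R) : 0 < x -> 0 < y -> 0 < v ->
  y * ln (y / v) <= x * ln (x / v) + (y - x) * (ln (x / v) + 1) + (y - x) ^ 2 / x.
Proof.
  intros Hx Hy Hv.
  replace (y / v) with (y / x * (x / v)) by (field; lra).
  rewrite ln_mult by (apply Rdiv_lt_0_compat; lra).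
  pose proof (ln_le_sub_one (y / x) ltac:(apply Rdiv_lt_0_compat; lra)) as Hlog.
  assert (H : y * ln (y / x) <= y * (y / x - 1)) by (apply Rmult_le_compat_l; lra).
  replace (y * (y / x - 1)) with ((y - x) + (y - x) ^ 2 / x) in H by (field; lra).
  lra.
Qed.

Lemma KL_nonneg (d : nat) (x v : nat -> R) :
  (forall i, (i < d)%nat -> 0 < x i /\ 0 < v i) -> sumd d v <= sumd d x ->
  0 <= KL d x v.
Proof.
  intros Hpos Hmass.
  apply Rle_trans with (sumd d (fun i => x i - v i)).
  - rewrite sumd_minus. lra.
  - apply sumd_le. intros i Hi. destruct (Hpos i Hi). now apply entropy_term_lower.
Qed.

Lemma KL_segment_upper (d : nat) (x q v : nat -> R) (e : R) :
  (forall i, (i < d)%nat -> 0 < x i /\ 0 < q i /\ 0 < v i) ->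
  sumd d q = sumd d x -> 0 <= e <= 1 ->
  KL d (fun i => x i + e * (q i - x i)) v
  <= KL d x v + e * sumd d (fun i => (q i - x i) * ln (x i / v i))
     + e ^ 2 * sumd d (fun i => (q i - x i) ^ 2 / x i).
Proof.
  intros Hpos Hmass He.
  apply Rle_trans with (sumd d (fun i => x i * ln (x i / v i)
    + e * ((q i - x i) * ln (x i / v i)) + e * (q i - x i) + e ^ 2 * ((q i - x i) ^ 2 / x i))).
  - apply sumd_le. intros i Hi. destruct (Hpos i Hi) as (Hx & Hq & Hv).
    pose proof (entropy_term_upper (x i) (x i + e * (q i - x i)) (v i) Hx
      ltac:(nra) Hv) as H.
    replace (x i + e * (q i - x i) - x i) with (e * (q i - x i)) in H by ring.
    replace ((e * (q i - x i)) ^ 2 / x i) with (e ^ 2 * ((q i - x i) ^ 2 / x i)) in H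
      by (field; lra).
    lra.
  - rewrite !sumd_plus, !sumd_scal, sumd_minus, Hmass. unfold KL. lra.
Qed.

Lemma nonneg_of_small_perturbations (D C : R) :
  (forall e, 0 < e <= 1 -> 0 <= e * D + e ^ 2 * C) -> 0 <= D.
Proof.
  intros H. destruct (Rle_lt_dec 0 D) as [HD|HD]; [exact HD|].
  pose proof (Rabs_pos C) as HC. pose proof (Rle_abs C) as HCabs.
  set (e := Rmin 1 (- D / (2 * (Rabs C + 1)))).
  assert (He : 0 < e <= 1).
  { split; [apply Rmin_pos; [lra | apply Rdiv_lt_0_compat; lra] | apply Rmin_l]. }
  assert (HeC : e * (Rabs C + 1) <= - D / 2).
  { apply Rle_trans with (- D / (2 * (Rabs C + 1)) * (Rabs C + 1)).
    - apply Rmult_le_compat_r; [lra | apply Rmin_r].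
    - right. field. lra. }
  assert (Hquad : e * (e * C) <= e * (- D / 2))
    by (apply Rmult_le_compat_l; nra).
  specialize (H e He). nra.
Qed.

Lemma KL_projection_first_order (d : nat) (alpha : R) (p' v q : nat -> R) :
  (1 <= d)%nat -> 0 < alpha ->
  in_simplex_alpha d alpha p' ->
  (forall x, in_simplex_alpha d alpha x -> KL d p' v <= KL d x v) ->
  (forall i, (i < d)%nat -> 0 < v i) ->
  in_simplex_alpha d alpha q ->
  0 <= sumd d (fun i => (q i - p' i) * ln (p' i / v i)).
Proof.
  intros Hd Ha Hp' Hmin Hv Hq.
  apply (nonneg_of_small_perturbations _ (sumd d (fun i => (q i - p' i) ^ 2 / p' i))).
  intros e He.
  pose proof (Hmin _ (simplex_alpha_segment d alpha p' q e Hp' Hq ltac:(lra))) as Hopt.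
  assert (Hpos : forall i, (i < d)%nat -> 0 < p' i /\ 0 < q i /\ 0 < v i).
  { intros i Hi. repeat split; [apply (simplex_alpha_pos d alpha) .. | apply Hv]; auto. }
  assert (Hmass : sumd d q = sumd d p') by now rewrite (proj2 (proj1 Hq)), (proj2 (proj1 Hp')).
  pose proof (KL_segment_upper d p' q v e Hpos Hmass ltac:(lra)) as Hseg.
  lra.
Qed.

Lemma KL_projection_pythagoras (d : nat) (alpha : R) (p' v q : nat -> R) :
  (1 <= d)%nat -> 0 < alpha ->
  in_simplex_alpha d alpha p' ->
  (forall x, in_simplex_alpha d alpha x -> KL d p' v <= KL d x v) ->
  (forall i, (i < d)%nat -> 0 < v i) -> sumd d v <= 1 ->
  in_simplex_alpha d alpha q ->
  0 <= sumd d (fun i => q i * ln (p' i / v i)).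
Proof.
  intros Hd Ha Hp' Hmin Hv Hvsum Hq.
  pose proof (KL_projection_first_order d alpha p' v q Hd Ha Hp' Hmin Hv Hq) as Hfirst.
  assert (Hgibbs : 0 <= KL d p' v).
  { apply KL_nonneg; [|rewrite (proj2 (proj1 Hp')); exact Hvsum].
    intros i Hi. split; [apply (simplex_alpha_pos d alpha); auto | apply Hv, Hi]. }
  replace (sumd d (fun i => q i * ln (p' i / v i)))
    with (sumd d (fun i => (q i - p' i) * ln (p' i / v i)) + KL d p' v).
  - lra.
  - unfold KL. rewrite <- sumd_plus. apply sumd_ext. intros i _. ring.
Qed.

Lemma log_ratio_decomposition (d : nat) (eta : R) (P L p' q : nat -> R) :
  (forall i, (i < d)%nat -> 0 < P i /\ 0 < p' i) ->
  0 < normalizer d eta P L -> sumd d q = 1 ->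
  sumd d (fun i => q i * ln (p' i / P i))
  = sumd d (fun i => q i * ln (p' i / preweight d eta P L i))
    - eta * sumd d (fun i => q i * L i) - ln (normalizer d eta P L).
Proof.
  intros Hpos HZ Hqsum.
  rewrite (sumd_ext d _ (fun i => q i * ln (p' i / preweight d eta P L i)
    - eta * (q i * L i) - ln (normalizer d eta P L) * q i)).
  - rewrite !sumd_minus, !sumd_scal, Hqsum. ring.
  - intros i Hi. destruct (Hpos i Hi) as [HP Hp'].
    pose proof (preweight_pos d eta P L i HP HZ) as Hv.
    replace (p' i / P i) with (p' i / preweight d eta P L i * (preweight d eta P L i / P i))
      by (field; lra).
    rewrite ln_mult, preweight_log_ratio by (try apply Rdiv_lt_0_compat; assumption).
    ring.
Qed.

Lemma projected_exp_weights_step (d : nat) (alpha eta : R) (P L p' q : nat -> R) :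
  (1 <= d)%nat -> 0 < alpha -> 0 < eta ->
  in_simplex d P -> (forall i, (i < d)%nat -> 0 < P i) ->
  (forall i, (i < d)%nat -> 0 <= L i <= 1) ->
  in_simplex_alpha d alpha p' ->
  (forall x, in_simplex_alpha d alpha x ->
     KL d p' (preweight d eta P L) <= KL d x (preweight d eta P L)) ->
  in_simplex_alpha d alpha q ->
  sumd d (fun i => (P i - q i) * L i)
  <= / eta * sumd d (fun i => q i * ln (p' i / P i)) + eta / 8.
Proof.
  intros Hd Ha Heta HP HPpos HL Hp' Hmin Hq.
  assert (HZ : 0 < normalizer d eta P L) by (apply normalizer_pos; auto; lra).
  rewrite (log_ratio_decomposition d eta P L p' q); [| | exact HZ | exact (proj2 (proj1 Hq))].
  2:{ intros i Hi. split; [apply HPpos, Hi | apply (simplex_alpha_pos d alpha); auto]. }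
  assert (Hpyth : 0 <= sumd d (fun i => q i * ln (p' i / preweight d eta P L i))).
  { apply (KL_projection_pythagoras d alpha); auto.
    - intros i Hi. apply preweight_pos; auto.
    - right. now apply preweight_sum. }
  pose proof (hoeffding_mixture d eta P L ltac:(lra) HP HL) as Hhoeffding.
  rewrite (sumd_ext d _ (fun i => P i * L i - q i * L i)) by (intros; ring).
  rewrite sumd_minus.
  apply Rmult_le_reg_l with eta; [exact Heta|].
  rewrite Rmult_plus_distr_l, <- Rmult_assoc, Rinv_r, Rmult_1_l by lra.
  lra.
Qed.

Lemma share_run_iterate_pos (d : nat) (alpha eta : R) (l p : nat -> nat -> R) (t : nat) :
  (1 <= d)%nat -> 0 < alpha -> share_projection_run d alpha eta l p -> (1 <= t)%nat ->
  in_simplex d (p t) /\ (forall i, (i < d)%nat -> 0 < p t i).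
Proof.
  intros Hd Ha [Hinit Hstep] Ht.
  destruct t as [|[|t]]; [lia | |].
  - assert (Hd1 : 1 <= INR d) by (apply (le_INR 1); exact Hd).
    assert (Hunif : 0 < 1 / INR d <= 1).
    { split; [apply Rdiv_lt_0_compat; lra|].
      unfold Rdiv. rewrite Rmult_1_l, <- Rinv_1. apply Rinv_le_contravar; lra. }
    split; [split|].
    + intros i Hi. rewrite Hinit by exact Hi. lra.
    + rewrite (sumd_ext d _ (fun _ => 1 / INR d)) by exact Hinit.
      rewrite sumd_const. field. lra.
    + intros i Hi. rewrite Hinit by exact Hi. lra.
  - destruct (Hstep (S t) ltac:(lia)) as [Hsimplex _].
    split; [exact (proj1 Hsimplex) | intros i Hi; apply (simplex_alpha_pos d alpha); auto].
Qed.

Theorem mainTheorem3 (d : nat) (alpha eta : R) (l p : nat -> nat -> R) :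
  (1 <= d)%nat ->
  0 < alpha < 1 ->
  0 < eta ->
  (forall t i, (1 <= t)%nat -> (i < d)%nat -> 0 <= l t i <= 1) ->
  share_projection_run d alpha eta l p ->
  forall (t : nat) (q : nat -> R),
    (1 <= t)%nat ->
    in_simplex_alpha d alpha q ->
    sumd d (fun i => (p t i - q i) * l t i)
    <= / eta * sumd d (fun i => q i * ln (p (S t) i / p t i)) + eta / 8.
Proof.
  intros Hd Ha Heta Hl Hrun t q Ht Hq.
  destruct (share_run_iterate_pos d alpha eta l p t Hd (proj1 Ha) Hrun Ht) as [HP HPpos].
  destruct (proj2 Hrun t Ht) as [Hnext Hmin].
  apply (projected_exp_weights_step d alpha);
    [exact Hd | lra | exact Heta | exact HP | exact HPpos
    | intros i Hi; apply Hl; assumption | exact Hnext | exact Hmin | exact Hq].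
Qed.
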